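(* Let $\omega=\{\omega_n\}_{n\ge 0}$ be a valid weight, let $a\in\mathbb{C}\setminus\{0\}$, and let $V_a=M_{a-z}^*M_{a-z}$ act on $H^2_\omega$. For each $\lambda\in\sigma_{\mathrm p}(V_a)$, every associated eigenfunction $h(z)=\sum_{n\ge0}h_nz^n\in H^2_\omega$ (i.e. $h\neq 0$ with $V_ah=\lambda h$) has Taylor coefficients satisfying \[ |a|^2h_n - a h_{n+1}\frac{\omega_{n+1}}{\omega_n} - \overline{a}\,h_{n-1} + h_n\frac{\omega_{n+1}}{\omega_n}=\lambda h_n\qquad\text{for each } n\ge 0, \] with the convention $h_{-1}=0$; this recurrence relation has a unique solution up to normalization (i.e. up to multiplication by a scalar), and the eigenfunction is given by it.
   Context: A weight $\omega=\{\omega_n\}_{n\ge0}$ is called valid if it is a monotonic sequence of positive numbers with $\omega_0=1$, $\lim_{n\to\infty}\omega_{n+1}/\omega_n=1$ and $\sum_{n=0}^\infty(1-\omega_{n+1}/\omega_n)^2<\infty$. The weighted Hardy space $H^2_\omega$ is the Hilbert space of holomorphic functions $f(z)=\sum_{n\ge0}a_nz^n$ on the unit disc $\mathbb{D}$ with $\|f\|_\omega^2=\sum_{n\ge0}|a_n|^2\omega_n<\infty$, with inner product $\langle f,g\rangle=\sum_n a_n\overline{b_n}\omega_n$. For a polynomial $\varphi$, $M_\varphi$ denotes the (bounded) operator of multiplication by $\varphi$ on $H^2_\omega$ and $M_\varphi^*$ its Hilbert space adjoint. $\sigma_{\mathrm p}$ denotes the point spectrum (set of eigenvalues). *)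

From HB Require Import structures.
From mathcomp Require Import all_boot all_order all_algebra.
From mathcomp Require Import all_classical all_reals all_analysis.
From mathcomp Require Export complex.
Import Order.TTheory GRing.Theory Num.Theory numFieldNormedType.Exports.

Set Implicit Arguments.
Unset Strict Implicit.
Unset Printing Implicit Defensive.

Local Open Scope ring_scope.
Local Open Scope complex_scope.
Local Open Scope classical_set_scope.

Section WeightedHardy.
Variable R : realType.

Definition valid_weight (w : nat -> R) : Prop :=
  [/\ (forall n, 0 < w n), w 0%N = 1,
      nondecreasing_seq w \/ nonincreasing_seq w,
      (fun n => w n.+1 / w n) @ \oo --> (1 : R) &
      cvgn (series (fun n => (1 - w n.+1 / w n) ^+ 2))].

(* Elements of H^2_w are identified with their Taylor coefficient
   sequences f : nat -> R[i];  f \in H^2_w iff sum |f_n|^2 w_n < oo. *)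
Definition in_H2 (w : nat -> R) (f : nat -> R[i]) : Prop :=
  cvgn (series (fun n => (Normc.normc (f n)) ^+ 2 * w n)).

Definition ip_term (w : nat -> R) (f g : nat -> R[i]) (n : nat) : R[i] :=
  f n * (g n)^* * (w n)%:C.

(* <f, g> = sum_n f_n conj(g_n) w_n, the (absolutely convergent, for
   f, g in H^2_w) complex series being summed via its real and
   imaginary parts. *)
Definition ip (w : nat -> R) (f g : nat -> R[i]) : R[i] :=
  Complex (limn (series (fun n => complex.Re (ip_term w f g n))))
          (limn (series (fun n => complex.Im (ip_term w f g n)))).

Definition prevc (f : nat -> R[i]) (n : nat) : R[i] :=
  if n is k.+1 then f k else 0.

Definition Mul_a_minus_z (a : R[i]) (f : nat -> R[i]) : nat -> R[i] :=
  fun n => a * f n - prevc f n.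

Definition is_adjoint (w : nat -> R) (T T' : (nat -> R[i]) -> (nat -> R[i]))
  : Prop :=
  (forall g, in_H2 w g -> in_H2 w (T' g)) /\
  (forall f g, in_H2 w f -> in_H2 w g -> ip w (T f) g = ip w f (T' g)).

Definition eigen_recurrence (w : nat -> R) (a lam : R[i]) (h : nat -> R[i])
  : Prop :=
  forall n : nat,
    `|a| ^+ 2 * h n - a * h n.+1 * (w n.+1 / w n)%:C - a^* * prevc h n
      + h n * (w n.+1 / w n)%:C = lam * h n.

End WeightedHardy.

From HB Require Import structures.
From mathcomp Require Import all_boot all_order all_algebra.
From mathcomp Require Import ring lra.
From mathcomp Require Import all_classical all_reals all_analysis.
From mathcomp Require Import complex.
Import Order.TTheory GRing.Theory Num.Theory numFieldNormedType.Exports.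
Set Implicit Arguments.
Unset Strict Implicit.
Unset Printing Implicit Defensive.

Local Open Scope ring_scope.
Local Open Scope complex_scope.

(* Pairing the adjoint identity with the monomials z^n shows that M_{a-z}^*
   sends g to the sequence conj(a) g_n - g_{n+1} w_{n+1}/w_n; this applies to
   g = (a - z) h because (a - z) h stays in H^2_w, the ratios w_{n+1}/w_n being
   convergent and hence bounded.  As a <> 0 and w > 0, the recurrence determines h_{n+1}
   from h_n and h_{n-1}; so its solutions are determined by h_0, they form a
   line, and h_0 <> 0 for an eigenfunction. *)

Lemma cvg_series_finite_support (K : numFieldType) (V : normedModType K)
    (u : V ^nat) N :
  (forall m, (N <= m)%N -> u m = 0) -> (series u @ \oo --> series u N)%classic.
Proof.
move=> u0; apply: cvg_near_cst; near=> n.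
have leNn : (N <= n)%N by near: n; exact: nbhs_infty_ge.
rewrite !seriesEnat /= (big_cat_nat (leq0n N) leNn) /=.
rewrite [X in _ + X]big1_seq ?addr0 // => m /andP[_].
by rewrite mem_index_iota => /andP[/u0].
Unshelve. all: by end_near. Qed.

Section WeightedHardy.
Variable R : realType.
Implicit Types (w : nat -> R) (f g : nat -> R[i]).

Lemma ip_finite_support w f g N :
  (forall m, (N <= m)%N -> ip_term w f g m = 0) ->
  ip w f g = \sum_(0 <= m < N) ip_term w f g m.
Proof.
move=> vanish; rewrite /ip !(cvg_lim _ (cvg_series_finite_support (N := N) _)) //;
  try by move=> m /vanish ->.
rewrite !seriesEnat /= -(raddf_sum (@complex.Re R)).
rewrite -(raddf_sum (@complex.Im R)).
by case: (\sum_(0 <= m < N) _).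
Qed.

Lemma normc_ge0 (x : R[i]) : 0 <= Normc.normc x.
Proof. by case: x => ? ?; exact: sqrtr_ge0. Qed.

Lemma normc_subr_sqr_le (x y : R[i]) :
  Normc.normc (x - y) ^+ 2 <= 2 * Normc.normc x ^+ 2 + 2 * Normc.normc y ^+ 2.
Proof.
have := le_normcD x (- y); rewrite normcN => le_sum.
have le_sqr : Normc.normc (x - y) ^+ 2 <= (Normc.normc x + Normc.normc y) ^+ 2.
  by rewrite ler_sqr ?nnegrE ?addr_ge0 ?normc_ge0.
have := sqr_ge0 (Normc.normc x - Normc.normc y).
nra.
Qed.

Section H2Closure.
Context {w : nat -> R}.
Hypothesis w_gt0 : forall n, 0 < w n.

Lemma weight_ratio_bounded : cvgn (fun n => w n.+1 / w n) ->
  exists C, forall n, w n.+1 <= C * w n.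
Proof.
move=> /cvg_seq_bounded/bounded_fun_has_ubound[C ubC].
by exists C => n; rewrite -ler_pdivrMr // ubC //; exists n.
Qed.

Let H2_term_ge0 (x : R[i]) n : 0 <= Normc.normc x ^+ 2 * w n.
Proof. by rewrite mulr_ge0 ?sqr_ge0 ?ltW. Qed.

Lemma in_H2_scale c f : in_H2 w f -> in_H2 w (fun n => c * f n).
Proof.
move=> Hf; rewrite /in_H2 (_ : (fun n => _) =
  Normc.normc c ^+ 2 *: (fun n => Normc.normc (f n) ^+ 2 * w n)).
  exact: is_cvg_seriesZ.
by apply/funext => n; rewrite fctE Normc.normcM exprMn -mulrA.
Qed.

Lemma in_H2_sub f g : in_H2 w f -> in_H2 w g -> in_H2 w (fun n => f n - g n).
Proof.
move=> /(@is_cvg_seriesZ _ _ 2) Hf /(@is_cvg_seriesZ _ _ 2) Hg.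
rewrite /in_H2.
apply: (series_le_cvg _ _ _ (is_cvg_seriesD Hf Hg)) => [n|n|n] /=.
- exact: H2_term_ge0.
- by rewrite addr_ge0 // mulr_ge0 // H2_term_ge0.
- apply: le_trans (ler_wpM2r (ltW (w_gt0 n)) (normc_subr_sqr_le _ _)) _.
  by rewrite mulrDl -!(mulrA 2) !fctE.
Qed.

Lemma in_H2_prevc C f :
  (forall n, w n.+1 <= C * w n) -> in_H2 w f -> in_H2 w (prevc f).
Proof.
move=> ratio Hf.
have C_ge0 : 0 <= C.
  by rewrite -(@pmulr_lge0 _ (w 0%N)) // (le_trans _ (ratio 0%N)) ?ltW.
pose q n := Normc.normc (f n) ^+ 2 * w n.+1.
have Hq : cvgn (series q).
  apply: (series_le_cvg _ _ _ (@is_cvg_seriesZ _ _ C Hf)) => [n|n|n] /=.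
  - by rewrite mulr_ge0 ?sqr_ge0 ?ltW.
  - by rewrite mulr_ge0 ?H2_term_ge0.
  - apply: le_trans (ler_wpM2l (sqr_ge0 _) (ratio n)) _.
    by rewrite mulrCA fctE.
rewrite /in_H2; apply: (cvgP (limn (series q))); rewrite -cvg_shiftS.
suff -> : [sequence series (fun n => Normc.normc (prevc f n) ^+ 2 * w n) n.+1]_n
  = series q by exact: Hq.
apply/funext => n /=.
rewrite !seriesEnat /= big_nat_recl // [prevc f 0]/= Normc.normc0.
by rewrite expr0n mul0r add0r.
Qed.

End H2Closure.

Lemma in_H2_Mul_a_minus_z w a f :
  valid_weight w -> in_H2 w f -> in_H2 w (Mul_a_minus_z a f).
Proof.
case=> w_gt0 _ _ ratio_cvg _ Hf.
have [C ratioC] := weight_ratio_bounded w_gt0 (cvgP _ ratio_cvg).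
have Haf := in_H2_scale (c := a) Hf.
exact: (in_H2_sub w_gt0 Haf (in_H2_prevc w_gt0 ratioC Hf)).
Qed.

Definition monomial (n : nat) : nat -> R[i] := fun m => (m == n)%:R.

Lemma in_H2_monomial w n : in_H2 w (monomial n).
Proof.
apply: (cvgP _ (cvg_series_finite_support (N := n.+1) _)) => m ltnm.
by rewrite /monomial gtn_eqF // Normc.normc0 expr0n mul0r.
Qed.

Lemma ip_monomial_l w n g : ip w (monomial n) g = (g n)^* * (w n)%:C.
Proof.
rewrite (@ip_finite_support _ _ _ n.+1) => [|m ltnm]; last first.
  by rewrite /ip_term /monomial gtn_eqF // !mul0r.
rewrite big_nat_recr //= big1_seq => [|m]; last first.
  move=> /andP[_]; rewrite mem_index_iota => /andP[_ ltmn].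
  by rewrite /ip_term /monomial ltn_eqF // !mul0r.
by rewrite /ip_term /monomial eqxx mul1r add0r.
Qed.

Lemma ip_Mul_a_minus_z_monomial w a n g :
  ip w (Mul_a_minus_z a (monomial n)) g =
  a * (g n)^* * (w n)%:C - (g n.+1)^* * (w n.+1)%:C.
Proof.
have coef m : Mul_a_minus_z a (monomial n) m = a * (m == n)%:R - (m == n.+1)%:R.
  by case: m.
rewrite (@ip_finite_support _ _ _ n.+2) => [|m ltnm]; last first.
  rewrite /ip_term coef (gtn_eqF ltnm) (gtn_eqF (ltnW ltnm)).
  by rewrite mulr0 subrr !mul0r.
rewrite !big_nat_recr //= big1_seq => [|m]; last first.
  move=> /andP[_]; rewrite mem_index_iota => /andP[_ ltmn].
  have ltmSn : (m < n.+1)%N := ltn_trans ltmn (ltnSn n).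
  by rewrite /ip_term coef (ltn_eqF ltmn) (ltn_eqF ltmSn) mulr0 subrr !mul0r.
rewrite /ip_term !coef !eqxx (gtn_eqF (ltnSn n)) ltn_eqF //.
by rewrite mulr1 mulr0 subr0 sub0r add0r mulN1r mulNr.
Qed.

Lemma Mul_a_minus_z_adjointE w a Madj g n :
  (forall n, 0 < w n) -> is_adjoint w (Mul_a_minus_z a) Madj -> in_H2 w g ->
  Madj g n = a^* * g n - g n.+1 * (w n.+1 / w n)%:C.
Proof.
move=> w_gt0 [_ adj] Hg.
have := adj _ _ (@in_H2_monomial w n) Hg.
rewrite ip_Mul_a_minus_z_monomial ip_monomial_l => /(congr1 conjc).
rewrite rmorphB !rmorphM /= !oppr0 !complexr0 !conjcK => eq_conj.
have w_neq0 : (w n)%:C != 0 by rewrite fmorph_eq0 gt_eqF.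
by apply: (mulIf w_neq0); rewrite -eq_conj fmorphV; field.
Qed.

Section EigenRecurrence.
Variables (w : nat -> R) (a lam : R[i]).
Hypotheses (w_neq0 : forall n, w n != 0) (a_neq0 : a != 0).

Lemma eigen_recurrence_eq0 d :
  eigen_recurrence w a lam d -> d 0%N = 0 -> forall n, d n = 0.
Proof.
move=> rec d0.
have step n : prevc d n = 0 -> d n = 0 -> d n.+1 = 0.
  move=> d_prev d_n; move: (rec n).
  rewrite d_prev d_n !(mulr0, mul0r, subr0, addr0, sub0r).
  move/eqP; rewrite oppr_eq0 !mulf_eq0 (negbTE a_neq0) fmorph_eq0.
  by rewrite mulf_eq0 invr_eq0 !(negbTE (w_neq0 _)) /= orbF => /eqP.
suff d_pair n : d n = 0 /\ d n.+1 = 0 by move=> n; case: (d_pair n).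
elim: n => [|n [dn dSn]]; first by split; last exact: step.
by split; last exact: step.
Qed.

Lemma eigen_recurrence_sub c k h :
  eigen_recurrence w a lam k -> eigen_recurrence w a lam h ->
  eigen_recurrence w a lam (fun n => k n - c * h n).
Proof.
move=> rec_k rec_h n.
have -> : prevc (fun n => k n - c * h n) n = prevc k n - c * prevc h n.
  by case: n {rec_k rec_h} => [|n] /=; rewrite ?mulr0 ?subr0.
by rewrite [RHS]mulrBr [in RHS]mulrCA -(rec_k n) -(rec_h n); ring.
Qed.

Lemma eigen_recurrence_proportional h k :
  eigen_recurrence w a lam h -> eigen_recurrence w a lam k -> h 0%N != 0 ->
  forall n, k n = k 0%N / h 0%N * h n.
Proof.
move=> rec_h rec_k h0 n; apply/eqP; rewrite -subr_eq0; apply/eqP.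
have rec_d := eigen_recurrence_sub (k 0%N / h 0%N) rec_k rec_h.
by apply: (eigen_recurrence_eq0 rec_d); rewrite divfK ?subrr.
Qed.

End EigenRecurrence.

End WeightedHardy.

Theorem lemma3p1 (R : realType) (w : nat -> R) (a : R[i])
  (Madj : (nat -> R[i]) -> (nat -> R[i])) (lam : R[i]) (h : nat -> R[i]) :
  valid_weight w -> a != 0 ->
  is_adjoint w (Mul_a_minus_z a) Madj ->
  in_H2 w h -> (exists n, h n != 0) ->
  (forall n, Madj (Mul_a_minus_z a h) n = lam * h n) ->
  eigen_recurrence w a lam h /\
  (forall k : nat -> R[i], eigen_recurrence w a lam k ->
     exists c : R[i], forall n, k n = c * h n).
Proof.
move=> w_valid a_neq0 adj Hh [n0 hn0_neq0] eigen.
have w_gt0 : forall n, 0 < w n by case: w_valid.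
have w_neq0 n : w n != 0 by rewrite gt_eqF.
have rec_h : eigen_recurrence w a lam h.
  move=> n; have HMh := in_H2_Mul_a_minus_z (a := a) w_valid Hh.
  rewrite -eigen (Mul_a_minus_z_adjointE _ w_gt0 adj HMh) /Mul_a_minus_z.
  by rewrite normCK /=; ring.
split=> // k rec_k.
have h0_neq0 : h 0%N != 0.
  apply: contraNneq hn0_neq0 => h0_eq0.
  by rewrite (eigen_recurrence_eq0 w_neq0 a_neq0 rec_h h0_eq0).
exists (k 0%N / h 0%N).
exact: (eigen_recurrence_proportional w_neq0 a_neq0 rec_h rec_k h0_neq0).
Qed.
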